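(* Consider the mining game with $N\ge2$ miners, costs $0<c_1\le\dots\le c_N$, reward $R>0$ and capacity $\gamma\ge0$, at parameter values where the number $n$ of active miners does not change under small perturbations of the parameters. Let $i\ne j$ be active miners. Then $$\frac{\partial h_i^*}{\partial c_i}=\Delta_{i,1}+\Delta_{i,2}<0,\qquad \frac{\partial h_i^*}{\partial c_j}=\Delta_{i,2},$$ where $\Delta_{i,1}<0$ and $\Delta_{i,2}>0\iff h_i^*/H^*<1/2$. Furthermore, $$\frac{\partial}{\partial c_i}\frac{h_i^*}{H^*}=\widetilde\Delta_{i,1}+\widetilde\Delta_{i,2}<0,\qquad \frac{\partial}{\partial c_j}\frac{h_i^*}{H^*}=\widetilde\Delta_{i,2}>0,$$ where $\widetilde\Delta_{i,1}<0$ and $\widetilde\Delta_{i,2}>0$.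
   Context: Mining game: $N\ge2$ miners with costs-per-hash $0<c_1\le\dots\le c_N$; each miner $i$ chooses $h_i\ge0$, $H=\sum_j h_j$, payoff $\frac{h_i}{H}R-c_ih_i-\frac{\gamma}{2}h_i^2$ if $H>0$ and $0$ if $H=0$, with $R>0$, $\gamma\ge0$. The pure Nash equilibrium $h^*$ is unique; its active miners (those with $h_i^*>0$) are $1,\dots,n$ for some $2\le n\le N$, and with $c^{(n)}=\sum_{i=1}^nc_i$ one has $H^*=g(c_1,\dots,c_n,\gamma,R):=\frac{\sqrt{(c^{(n)})^2+4(n-1)R\gamma}-c^{(n)}}{2\gamma}$ for $\gamma>0$ (and $(n-1)R/c^{(n)}$ for $\gamma=0$), and $h_i^*=f_i(c_i,\gamma,R,H^* )$ for $i\le n$, where $f_i(c,\gamma,R,x):=x\frac{R-cx}{R+\gamma x^2}$. Derivatives are taken of these closed-form expressions with $n$ held fixed. Definitions: $\Delta_{i,1}:=\frac{\partial f_i}{\partial c}(c_i,\gamma,R,H^* )$ (direct effect, fourth argument held fixed) and $\Delta_{i,2}:=\frac{\partial f_i}{\partial x}(c_i,\gamma,R,H^* )\cdot\frac{\partial g}{\partial c_i}$ (indirect effect through $H^*$; note $\partial g/\partial c_i=\partial g/\partial c_j$). Similarly, $\widetilde\Delta_{i,1}$ is the partial derivative of $f_i(c,\gamma,R,x)/x$ in $c$ with $x=H^*$ held fixed, and $\widetilde\Delta_{i,2}:=\frac{\partial}{\partial x}\big(f_i(c_i,\gamma,R,x)/x\big)\big|_{x=H^*}\cdot\frac{\partial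 g}{\partial c_i}$. *)

(* Miners are indexed 0..N-1 (paper: 1..N). *)
From Stdlib Require Import Reals Lra.
From Coquelicot Require Import Coquelicot.
Open Scope R_scope.

Fixpoint sumR (n : nat) (f : nat -> R) : R :=
  match n with
  | O => 0
  | S m => sumR m f + f m
  end.

Definition upd (v : nat -> R) (i : nat) (t : R) : nat -> R :=
  fun k => if Nat.eqb k i then t else v k.

Definition payoff (N : nat) (c : nat -> R) (Rw gam : R) (h : nat -> R) (i : nat) : R :=
  let H := sumR N h in
  if Rlt_dec 0 H then h i / H * Rw - c i * h i - gam / 2 * (h i) ^ 2 else 0.

Definition is_NE (N : nat) (c : nat -> R) (Rw gam : R) (h : nat -> R) : Prop :=
  (forall k, (k < N)%nat -> 0 <= h k) /\
  forall i, (i < N)%nat -> forall x, 0 <= x ->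
    payoff N c Rw gam (upd h i x) i <= payoff N c Rw gam h i.

Definition gcf (n : nat) (gam Rw C : R) : R :=
  if Req_EM_T gam 0 then (INR n - 1) * Rw / C
  else (sqrt (C ^ 2 + 4 * (INR n - 1) * Rw * gam) - C) / (2 * gam).

Definition fcf (c gam Rw x : R) : R := x * (Rw - c * x) / (Rw + gam * x ^ 2).

(* H* and h_i* as closed-form functions of the cost vector, n held fixed *)
Definition Hstar (n : nat) (gam Rw : R) (c : nat -> R) : R :=
  gcf n gam Rw (sumR n c).
Definition hstar (n : nat) (gam Rw : R) (c : nat -> R) (i : nat) : R :=
  fcf (c i) gam Rw (Hstar n gam Rw c).

Definition Delta1 (n : nat) (gam Rw : R) (c : nat -> R) (i : nat) : R :=
  Derive (fun t => fcf t gam Rw (Hstar n gam Rw c)) (c i).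
Definition dg (n : nat) (gam Rw : R) (c : nat -> R) (i : nat) : R :=
  Derive (fun t => Hstar n gam Rw (upd c i t)) (c i).
Definition Delta2 (n : nat) (gam Rw : R) (c : nat -> R) (i : nat) : R :=
  Derive (fun x => fcf (c i) gam Rw x) (Hstar n gam Rw c) * dg n gam Rw c i.

Definition Delta1t (n : nat) (gam Rw : R) (c : nat -> R) (i : nat) : R :=
  Derive (fun t => fcf t gam Rw (Hstar n gam Rw c) / Hstar n gam Rw c) (c i).
Definition Delta2t (n : nat) (gam Rw : R) (c : nat -> R) (i : nat) : R :=
  Derive (fun x => fcf (c i) gam Rw x / x) (Hstar n gam Rw c) * dg n gam Rw c i.

(* At equilibrium every active miner's first-order condition reads
   c_k = R/H - (R/H^2 + gamma) h_k; summing over the n active miners gives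
   c^(n) H + gamma H^2 = (n-1) R, so H* = g(c^(n)) is the positive root of this
   quadratic, g' = -H/(2 gamma H + c^(n)) is the same for every active miner,
   and h_k = f_k(H). The comparative statics are then chain rules through
   f_i(c, x) and f_i(c, x)/x, and every sign reduces, after clearing positive
   denominators, to a polynomial whose sign follows from R - c_i H > 0
   (i.e. h_i > 0) and 0 < c_i < c^(n). *)

From Stdlib Require Import Reals Lra Lia.
From Coquelicot Require Import Coquelicot.
Open Scope R_scope.

Lemma upd_eq v i t : upd v i t i = t.
Proof. unfold upd. now rewrite Nat.eqb_refl. Qed.

Lemma upd_neq v i j t : j <> i -> upd v i t j = v j.
Proof. intros Hji. unfold upd. now destruct (Nat.eqb_spec j i). Qed.

Lemma sumR_ext m f g : (forall k, (k < m)%nat -> f k = g k) -> sumR m f = sumR m g.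
Proof.
  induction m as [|m IH]; intros Hfg; simpl; [reflexivity|].
  rewrite IH by (intros; apply Hfg; lia). rewrite Hfg by lia. reflexivity.
Qed.

Lemma sumR_upd m v i t : (i < m)%nat -> sumR m (upd v i t) = sumR m v + (t - v i).
Proof.
  induction m as [|m IH]; intros Hi; [lia|]. simpl.
  destruct (Nat.eq_dec i m) as [->|Him].
  - rewrite upd_eq, (sumR_ext m (upd v m t) v); [ring|].
    intros k Hk. apply upd_neq. lia.
  - rewrite IH, upd_neq by lia. ring.
Qed.

Lemma sumR_affine m a b f : sumR m (fun k => a + b * f k) = INR m * a + b * sumR m f.
Proof.
  induction m as [|m IH]; simpl sumR; [simpl; ring|]. rewrite IH, S_INR. ring.
Qed.

Lemma sumR_nonneg m f : (forall k, (k < m)%nat -> 0 <= f k) -> 0 <= sumR m f.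
Proof.
  induction m as [|m IH]; intros Hf; simpl; [lra|].
  assert (0 <= f m) by (apply Hf; lia).
  assert (0 <= sumR m f) by (apply IH; intros; apply Hf; lia). lra.
Qed.

Lemma sumR_ge_two m f i j : (forall k, (k < m)%nat -> 0 <= f k) ->
  (i < m)%nat -> (j < m)%nat -> i <> j -> f i + f j <= sumR m f.
Proof.
  intros Hf Hi Hj Hij.
  assert (Hrest : 0 <= sumR m (upd (upd f i 0) j 0)).
  { apply sumR_nonneg. intros k Hk. unfold upd.
    destruct (Nat.eqb k j), (Nat.eqb k i); auto; lra. }
  rewrite sumR_upd, sumR_upd, upd_neq in Hrest by lia. lra.
Qed.

Lemma sumR_zero_tail n N f : (n <= N)%nat ->
  (forall k, (n <= k < N)%nat -> f k = 0) -> sumR N f = sumR n f.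
Proof.
  induction N as [|N IH]; intros HnN Hf; [now replace n with 0%nat by lia|].
  destruct (Nat.eq_dec n (S N)) as [->|HnN']; [reflexivity|].
  simpl. rewrite IH; [rewrite (Hf N) by lia; ring|lia|intros; apply Hf; lia].
Qed.

Lemma sorted_pos N (c : nat -> R) : 0 < c 0%nat ->
  (forall k, (S k < N)%nat -> c k <= c (S k)) -> forall k, (k < N)%nat -> 0 < c k.
Proof.
  intros Hc0 Hmono k. induction k as [|k IH]; intros Hk; [exact Hc0|].
  assert (c k <= c (S k)) by (apply Hmono; lia).
  assert (0 < c k) by (apply IH; lia). lra.
Qed.

Lemma is_derive_interior_max (f : R -> R) a b x l : a < x < b ->
  (forall y, a < y -> y < b -> f y <= f x) -> is_derive f x l -> l = 0.
Proof.
  intros Hx Hmax Hd. apply is_derive_Reals in Hd.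
  exact (deriv_maximum f a b x (exist _ l Hd) (proj1 Hx) (proj2 Hx) Hmax).
Qed.

(* [A] stands for the total hash rate of the other miners. *)
Lemma best_response_stationary A ck gam Rw hk : 0 < A -> 0 < hk ->
  (forall x, 0 < x ->
     x / (A + x) * Rw - ck * x - gam / 2 * x ^ 2
     <= hk / (A + hk) * Rw - ck * hk - gam / 2 * hk ^ 2) ->
  Rw * A / (A + hk) ^ 2 - ck - gam * hk = 0.
Proof.
  intros HA Hhk Hmax.
  apply (is_derive_interior_max
           (fun x => x / (A + x) * Rw - ck * x - gam / 2 * x ^ 2) 0 (hk + 1) hk).
  - lra.
  - intros y Hy _. exact (Hmax y Hy).
  - auto_derive; [lra|]. field. lra.
Qed.

(* Implicit differentiation of [C g + gam g^2 = (n - 1) Rw] in [C]. *)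
Definition dgcf (gam C x : R) : R := - x / (2 * gam * x + C).

Lemma gcf_pos_root n gam Rw C x : (1 < n)%nat -> 0 < Rw -> 0 <= gam -> 0 < x ->
  C * x + gam * x ^ 2 = (INR n - 1) * Rw -> gcf n gam Rw C = x.
Proof.
  intros Hn HRw Hgam Hx Hroot.
  assert (Hn1 : 0 < (INR n - 1) * Rw) by (apply lt_1_INR in Hn; nra).
  unfold gcf. destruct (Req_EM_T gam 0) as [->|Hgam0].
  - assert (C <> 0) by (intros ->; nra). field_simplify_eq; [nra|assumption].
  - rewrite (sqrt_lem_1 _ (2 * gam * x + C)); [field; exact Hgam0|nra|nra|nra].
Qed.

Lemma is_derive_gcf n gam Rw C x : (1 < n)%nat -> 0 < Rw -> 0 <= gam -> 0 < x ->
  C * x + gam * x ^ 2 = (INR n - 1) * Rw -> is_derive (gcf n gam Rw) C (dgcf gam C x).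
Proof.
  intros Hn HRw Hgam Hx Hroot.
  assert (Hn1 : 0 < (INR n - 1) * Rw) by (apply lt_1_INR in Hn; nra).
  assert (HS : 0 < 2 * gam * x + C) by nra.
  unfold gcf, dgcf. destruct (Req_EM_T gam 0) as [->|Hgam0].
  - auto_derive; [nra|]. field_simplify_eq; nra.
  - assert (Hsq : sqrt (C ^ 2 + 4 * (INR n - 1) * Rw * gam) = 2 * gam * x + C)
      by (apply sqrt_lem_1; nra).
    auto_derive; [nra|].
    replace (C * (C * 1)) with (C ^ 2) by ring. rewrite Hsq.
    field. split; [lra|exact Hgam0].
Qed.

Section Equilibrium.
Variables (N n : nat) (c : nat -> R) (Rw gam : R) (h : nat -> R).
Hypotheses (HRw : 0 < Rw) (Hgam : 0 <= gam) (HNE : is_NE N c Rw gam h)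
  (Hn : (2 <= n <= N)%nat)
  (Hact : forall k, (k < N)%nat -> (0 < h k <-> (k < n)%nat)).

Lemma equilibrium_active_pos k : (k < n)%nat -> 0 < h k.
Proof. intros Hk. apply Hact; lia. Qed.

Lemma equilibrium_sum_active : sumR N h = sumR n h.
Proof.
  apply sumR_zero_tail; [lia|]. intros k Hk.
  assert (0 <= h k) by (apply (proj1 HNE); lia).
  destruct (Rlt_dec 0 (h k)) as [Hpos|]; [|lra].
  apply Hact in Hpos; lia.
Qed.

Lemma equilibrium_others_pos k : (k < n)%nat -> h k < sumR N h.
Proof.
  intros Hk. set (m := if Nat.eq_dec k 0 then 1%nat else 0%nat).
  assert (Hm : (m < n)%nat /\ m <> k) by (unfold m; destruct Nat.eq_dec; lia).
  assert (h k + h m <= sumR N h).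
  { apply sumR_ge_two; try lia. intros; apply (proj1 HNE); lia. }
  assert (0 < h m) by (apply equilibrium_active_pos; tauto). lra.
Qed.

Lemma equilibrium_total_pos : 0 < sumR N h.
Proof.
  assert (0 < h 0%nat) by (apply equilibrium_active_pos; lia).
  assert (h 0%nat < sumR N h) by (apply equilibrium_others_pos; lia). lra.
Qed.

Lemma equilibrium_foc k : (k < n)%nat ->
  Rw * (sumR N h - h k) / (sumR N h) ^ 2 - c k - gam * h k = 0.
Proof.
  intros Hk. set (H := sumR N h).
  assert (Hhk : 0 < h k) by (apply equilibrium_active_pos, Hk).
  assert (HA : 0 < H - h k) by (apply Rlt_0_minus, equilibrium_others_pos, Hk).
  replace H with (H - h k + h k) at 2 by ring.
  apply best_response_stationary; [exact HA|exact Hhk|].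
  intros x Hx.
  assert (Hdev := proj2 HNE k ltac:(lia) x ltac:(lra)).
  unfold payoff in Hdev. rewrite sumR_upd, upd_eq in Hdev by lia. fold H in Hdev.
  destruct (Rlt_dec 0 (H + (x - h k))); [|lra].
  destruct (Rlt_dec 0 H); [|lra].
  replace (H - h k + x) with (H + (x - h k)) by ring.
  replace (H - h k + h k) with H by ring. exact Hdev.
Qed.

Lemma equilibrium_hstar k : (k < n)%nat -> h k = fcf (c k) gam Rw (sumR N h).
Proof.
  intros Hk. assert (Hfoc := equilibrium_foc k Hk).
  assert (HH := equilibrium_total_pos). set (H := sumR N h) in *.
  assert (0 < Rw + gam * H ^ 2) by nra.
  replace (c k) with (Rw * (H - h k) / H ^ 2 - gam * h k) by lra.
  unfold fcf. field. lra.
Qed.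

Lemma equilibrium_margin k : (k < n)%nat -> c k * sumR N h < Rw.
Proof.
  intros Hk. assert (Hhk := equilibrium_active_pos k Hk).
  assert (HH := equilibrium_total_pos).
  rewrite (equilibrium_hstar k Hk) in Hhk. unfold fcf in Hhk.
  set (H := sumR N h) in *.
  assert (0 < Rw + gam * H ^ 2) by nra.
  assert (0 < H * (Rw - c k * H)) by (apply Rdiv_pos_cases in Hhk; nra).
  nra.
Qed.

Lemma equilibrium_cost_sum :
  sumR n c * sumR N h + gam * (sumR N h) ^ 2 = (INR n - 1) * Rw.
Proof.
  set (H := sumR N h). assert (HH : 0 < H) by apply equilibrium_total_pos.
  assert (Hc : forall k, (k < n)%nat -> c k = Rw / H + (- (Rw / H ^ 2) - gam) * h k).
  { intros k Hk. assert (Hfoc := equilibrium_foc k Hk). fold H in Hfoc.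
    transitivity (Rw * (H - h k) / H ^ 2 - gam * h k); [lra|field; lra]. }
  rewrite (sumR_ext n c _ Hc), sumR_affine, <- equilibrium_sum_active. fold H.
  field. lra.
Qed.

Lemma Hstar_equilibrium : Hstar n gam Rw c = sumR N h.
Proof.
  apply gcf_pos_root; auto; [lia|apply equilibrium_total_pos|apply equilibrium_cost_sum].
Qed.

End Equilibrium.

Lemma is_derive_translate (f : R -> R) x a l :
  is_derive f x l -> is_derive (fun t => f (x + (t - a))) a l.
Proof.
  intros Hf.
  assert (Hf' : is_derive f (x + (a - a)) l) by (now rewrite Rminus_diag, Rplus_0_r).
  assert (Hlin : is_derive (fun t => x + (t - a)) a 1) by (auto_derive; [exact I|ring]).
  assert (D := is_derive_comp f _ a l 1 Hf' Hlin).
  change (scal (1 : R) l) with (1 * l) in D. now rewrite Rmult_1_l in D.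
Qed.

Definition dfcf_c (gam Rw x : R) : R := - x ^ 2 / (Rw + gam * x ^ 2).
Definition dfcf_x (c gam Rw x : R) : R :=
  Rw * (Rw - gam * x ^ 2 - 2 * c * x) / (Rw + gam * x ^ 2) ^ 2.
Definition dshare_c (gam Rw x : R) : R := - x / (Rw + gam * x ^ 2).
Definition dshare_x (c gam Rw x : R) : R :=
  - (c * Rw - c * gam * x ^ 2 + 2 * Rw * gam * x) / (Rw + gam * x ^ 2) ^ 2.

Lemma is_derive_fcf_c c gam Rw x : Rw + gam * x ^ 2 <> 0 ->
  is_derive (fun t => fcf t gam Rw x) c (dfcf_c gam Rw x).
Proof. intros Hd. unfold fcf, dfcf_c. auto_derive; [tauto|]. field. exact Hd. Qed.

Lemma is_derive_fcf_x c gam Rw x : Rw + gam * x ^ 2 <> 0 ->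
  is_derive (fun y => fcf c gam Rw y) x (dfcf_x c gam Rw x).
Proof. intros Hd. unfold fcf, dfcf_x. auto_derive; [tauto|]. field. exact Hd. Qed.

Lemma is_derive_share_c c gam Rw x : x <> 0 -> Rw + gam * x ^ 2 <> 0 ->
  is_derive (fun t => fcf t gam Rw x / x) c (dshare_c gam Rw x).
Proof. intros Hx Hd. unfold fcf, dshare_c. auto_derive; [tauto|]. field. tauto. Qed.

Lemma is_derive_share_x c gam Rw x : x <> 0 -> Rw + gam * x ^ 2 <> 0 ->
  is_derive (fun y => fcf c gam Rw y / y) x (dshare_x c gam Rw x).
Proof. intros Hx Hd. unfold fcf, dshare_x. auto_derive; [tauto|]. field. tauto. Qed.

Lemma is_derive_fcf_along (K : R -> R) a Kp gam Rw :
  is_derive K a Kp -> Rw + gam * K a ^ 2 <> 0 ->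
  is_derive (fun t => fcf t gam Rw (K t)) a
    (dfcf_c gam Rw (K a) + dfcf_x a gam Rw (K a) * Kp).
Proof.
  intros HK Hd. unfold fcf, dfcf_c, dfcf_x.
  auto_derive.
  { repeat split; try (exists Kp; exact HK). intros E; apply Hd; rewrite <- E; ring. }
  replace (Derive (fun y => K y) a) with Kp by (symmetry; exact (is_derive_unique K a Kp HK)).
  field. exact Hd.
Qed.

Lemma is_derive_share_along (K : R -> R) a Kp gam Rw :
  is_derive K a Kp -> K a <> 0 -> Rw + gam * K a ^ 2 <> 0 ->
  is_derive (fun t => fcf t gam Rw (K t) / K t) a
    (dshare_c gam Rw (K a) + dshare_x a gam Rw (K a) * Kp).
Proof.
  intros HK Hx Hd. unfold fcf, dshare_c, dshare_x.
  auto_derive.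
  { repeat split; try (exists Kp; exact HK); try exact Hx.
    intros E; apply Hd; rewrite <- E; ring. }
  replace (Derive (fun y => K y) a) with Kp by (symmetry; exact (is_derive_unique K a Kp HK)).
  field. tauto.
Qed.

Lemma Hstar_upd_same n gam Rw c k : Hstar n gam Rw (upd c k (c k)) = Hstar n gam Rw c.
Proof.
  unfold Hstar. f_equal. apply sumR_ext. intros m _.
  destruct (Nat.eq_dec m k) as [->|Hmk]; [apply upd_eq|apply upd_neq, Hmk].
Qed.

Section Comparative_statics.
Variables (n : nat) (gam Rw dG : R) (c : nat -> R).
Hypotheses (HdG : is_derive (gcf n gam Rw) (sumR n c) dG)
  (Hden : Rw + gam * Hstar n gam Rw c ^ 2 <> 0) (HH : Hstar n gam Rw c <> 0).

Lemma is_derive_Hstar_upd k : (k < n)%nat ->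
  is_derive (fun t => Hstar n gam Rw (upd c k t)) (c k) dG.
Proof.
  intros Hk. apply (is_derive_ext (fun t => gcf n gam Rw (sumR n c + (t - c k)))).
  - intros t. unfold Hstar. now rewrite sumR_upd.
  - now apply is_derive_translate.
Qed.

Lemma dg_eq k : (k < n)%nat -> dg n gam Rw c k = dG.
Proof. intros Hk. apply is_derive_unique, is_derive_Hstar_upd, Hk. Qed.

Lemma Delta1_eq i : Delta1 n gam Rw c i = dfcf_c gam Rw (Hstar n gam Rw c).
Proof. apply is_derive_unique, is_derive_fcf_c, Hden. Qed.

Lemma Delta2_eq i : (i < n)%nat ->
  Delta2 n gam Rw c i = dfcf_x (c i) gam Rw (Hstar n gam Rw c) * dG.
Proof.
  intros Hi. unfold Delta2. rewrite dg_eq by exact Hi.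
  f_equal. apply is_derive_unique, is_derive_fcf_x, Hden.
Qed.

Lemma Delta1t_eq i : Delta1t n gam Rw c i = dshare_c gam Rw (Hstar n gam Rw c).
Proof. apply is_derive_unique, is_derive_share_c; assumption. Qed.

Lemma Delta2t_eq i : (i < n)%nat ->
  Delta2t n gam Rw c i = dshare_x (c i) gam Rw (Hstar n gam Rw c) * dG.
Proof.
  intros Hi. unfold Delta2t. rewrite dg_eq by exact Hi.
  f_equal. apply is_derive_unique, is_derive_share_x; assumption.
Qed.

Lemma is_derive_hstar_own i : (i < n)%nat ->
  is_derive (fun t => hstar n gam Rw (upd c i t) i) (c i)
    (Delta1 n gam Rw c i + Delta2 n gam Rw c i).
Proof.
  intros Hi. rewrite Delta1_eq, Delta2_eq by exact Hi.
  apply (is_derive_ext (fun t => fcf t gam Rw (Hstar n gam Rw (upd c i t)))).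
  { intros t. unfold hstar. now rewrite upd_eq. }
  generalize (is_derive_fcf_along _ _ _ gam Rw (is_derive_Hstar_upd i Hi)).
  rewrite Hstar_upd_same. intros D. exact (D Hden).
Qed.

Lemma is_derive_hstar_cross i j : (i < n)%nat -> (j < n)%nat -> i <> j ->
  is_derive (fun t => hstar n gam Rw (upd c j t) i) (c j) (Delta2 n gam Rw c i).
Proof.
  intros Hi Hj Hij. rewrite Delta2_eq by exact Hi.
  apply (is_derive_ext (fun t => fcf (c i) gam Rw (Hstar n gam Rw (upd c j t)))).
  { intros t. unfold hstar. now rewrite upd_neq. }
  rewrite Rmult_comm. apply (is_derive_comp (fun y => fcf (c i) gam Rw y)).
  - rewrite Hstar_upd_same. exact (is_derive_fcf_x _ _ _ _ Hden).
  - exact (is_derive_Hstar_upd j Hj).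
Qed.

Lemma is_derive_share_own i : (i < n)%nat ->
  is_derive (fun t => hstar n gam Rw (upd c i t) i / Hstar n gam Rw (upd c i t)) (c i)
    (Delta1t n gam Rw c i + Delta2t n gam Rw c i).
Proof.
  intros Hi. rewrite Delta1t_eq, Delta2t_eq by exact Hi.
  apply (is_derive_ext
    (fun t => fcf t gam Rw (Hstar n gam Rw (upd c i t)) / Hstar n gam Rw (upd c i t))).
  { intros t. unfold hstar. now rewrite upd_eq. }
  generalize (is_derive_share_along _ _ _ gam Rw (is_derive_Hstar_upd i Hi)).
  rewrite Hstar_upd_same. intros D. exact (D HH Hden).
Qed.

Lemma is_derive_share_cross i j : (i < n)%nat -> (j < n)%nat -> i <> j ->
  is_derive (fun t => hstar n gam Rw (upd c j t) i / Hstar n gam Rw (upd c j t)) (c j)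
    (Delta2t n gam Rw c i).
Proof.
  intros Hi Hj Hij. rewrite Delta2t_eq by exact Hi.
  apply (is_derive_ext
    (fun t => fcf (c i) gam Rw (Hstar n gam Rw (upd c j t)) / Hstar n gam Rw (upd c j t))).
  { intros t. unfold hstar. now rewrite upd_neq. }
  rewrite Rmult_comm. apply (is_derive_comp (fun y => fcf (c i) gam Rw y / y)).
  - rewrite Hstar_upd_same. exact (is_derive_share_x _ _ _ _ HH Hden).
  - exact (is_derive_Hstar_upd j Hj).
Qed.

End Comparative_statics.

Section Signs.
Variables (gam Rw C a x : R).
Hypotheses (Hx : 0 < x) (HRw : 0 < Rw) (Hgam : 0 <= gam) (Ha : 0 < a) (HaC : a < C)
  (Hmargin : a * x < Rw).

Lemma sign_denominator_pos : 0 < (Rw + gam * x ^ 2) ^ 2 * (2 * gam * x + C).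
Proof. apply Rmult_lt_0_compat; [apply pow_lt|]; nra. Qed.

Lemma dfcf_c_neg : dfcf_c gam Rw x < 0.
Proof.
  unfold dfcf_c. assert (0 < x ^ 2 / (Rw + gam * x ^ 2)) by (apply Rdiv_lt_0_compat; nra).
  unfold Rdiv in *. lra.
Qed.

Lemma dshare_c_neg : dshare_c gam Rw x < 0.
Proof.
  unfold dshare_c. assert (0 < x / (Rw + gam * x ^ 2)) by (apply Rdiv_lt_0_compat; nra).
  unfold Rdiv in *. lra.
Qed.

Lemma dfcf_total_neg : dfcf_c gam Rw x + dfcf_x a gam Rw x * dgcf gam C x < 0.
Proof.
  assert (Hd : 0 < Rw + gam * x ^ 2) by nra.
  assert (HS : 0 < 2 * gam * x + C) by nra.
  assert (HdS := sign_denominator_pos).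
  assert (E : dfcf_c gam Rw x + dfcf_x a gam Rw x * dgcf gam C x =
    - (x * (Rw * gam * x ^ 2 + 2 * gam ^ 2 * x ^ 4 + gam * C * x ^ 3
            + Rw * ((Rw - a * x) + (C - a) * x)))
    / ((Rw + gam * x ^ 2) ^ 2 * (2 * gam * x + C))).
  { unfold dfcf_c, dfcf_x, dgcf. field. repeat split; lra. }
  rewrite E, Rdiv_opp_l. apply Ropp_lt_gt_0_contravar, Rdiv_lt_0_compat; [|exact HdS].
  apply Rmult_lt_0_compat; [exact Hx|].
  assert (0 <= Rw * gam * x ^ 2) by (apply Rmult_le_pos; nra).
  assert (0 <= gam * C * x ^ 3) by (apply Rmult_le_pos; nra).
  assert (0 <= 2 * gam ^ 2 * x ^ 4) by (apply Rmult_le_pos; nra).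
  assert (0 < Rw * ((Rw - a * x) + (C - a) * x)) by (apply Rmult_lt_0_compat; nra).
  lra.
Qed.

Lemma dfcf_cross_pos_iff :
  0 < dfcf_x a gam Rw x * dgcf gam C x <-> fcf a gam Rw x / x < 1 / 2.
Proof.
  assert (Hd : 0 < Rw + gam * x ^ 2) by nra.
  assert (HS : 0 < 2 * gam * x + C) by nra.
  assert (HdS := sign_denominator_pos).
  set (E := Rw - gam * x ^ 2 - 2 * a * x).
  assert (E1 : dfcf_x a gam Rw x * dgcf gam C x =
    - (Rw * x / ((Rw + gam * x ^ 2) ^ 2 * (2 * gam * x + C)) * E)).
  { unfold dfcf_x, dgcf, E. field. repeat split; lra. }
  assert (E2 : fcf a gam Rw x / x = 1 / 2 + / (2 * (Rw + gam * x ^ 2)) * E).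
  { unfold fcf, E. field. lra. }
  assert (0 < Rw * x / ((Rw + gam * x ^ 2) ^ 2 * (2 * gam * x + C)))
    by (apply Rdiv_lt_0_compat; [nra|exact HdS]).
  assert (0 < / (2 * (Rw + gam * x ^ 2))) by (apply Rinv_0_lt_compat; lra).
  rewrite E1, E2. split; intros; nra.
Qed.

Lemma dshare_total_neg : dshare_c gam Rw x + dshare_x a gam Rw x * dgcf gam C x < 0.
Proof.
  assert (Hd : 0 < Rw + gam * x ^ 2) by nra.
  assert (HS : 0 < 2 * gam * x + C) by nra.
  assert (HdS := sign_denominator_pos).
  assert (E : dshare_c gam Rw x + dshare_x a gam Rw x * dgcf gam C x =
    - (x * (Rw * (C - a) + gam * x ^ 2 * (2 * gam * x + C + a)))
    / ((Rw + gam * x ^ 2) ^ 2 * (2 * gam * x + C))).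
  { unfold dshare_c, dshare_x, dgcf. field. repeat split; lra. }
  rewrite E, Rdiv_opp_l. apply Ropp_lt_gt_0_contravar, Rdiv_lt_0_compat; [|exact HdS].
  apply Rmult_lt_0_compat; [exact Hx|].
  assert (0 <= gam * x ^ 2 * (2 * gam * x + C + a)) by (apply Rmult_le_pos; nra).
  nra.
Qed.

Lemma dshare_cross_pos : 0 < dshare_x a gam Rw x * dgcf gam C x.
Proof.
  assert (Hd : 0 < Rw + gam * x ^ 2) by nra.
  assert (HS : 0 < 2 * gam * x + C) by nra.
  assert (HdS := sign_denominator_pos).
  assert (E : dshare_x a gam Rw x * dgcf gam C x =
    x * (a * Rw + gam * x * (Rw - a * x) + Rw * gam * x)
    / ((Rw + gam * x ^ 2) ^ 2 * (2 * gam * x + C))).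
  { unfold dshare_x, dgcf. field. repeat split; lra. }
  rewrite E. apply Rdiv_lt_0_compat; [|exact HdS].
  apply Rmult_lt_0_compat; [exact Hx|].
  assert (0 <= gam * x * (Rw - a * x)) by (apply Rmult_le_pos; nra).
  assert (0 <= Rw * gam * x) by (apply Rmult_le_pos; nra).
  nra.
Qed.

End Signs.

Theorem proposition4p5 (N n : nat) (c : nat -> R) (Rw gam : R) (h : nat -> R)
  (i j : nat) :
  (2 <= N)%nat ->
  0 < c 0%nat ->
  (forall k, (S k < N)%nat -> c k <= c (S k)) ->
  0 < Rw -> 0 <= gam ->
  is_NE N c Rw gam h ->
  (2 <= n <= N)%nat ->
  (forall k, (k < N)%nat -> (0 < h k <-> (k < n)%nat)) ->
  (i < n)%nat -> (j < n)%nat -> i <> j ->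
  let D1 := Delta1 n gam Rw c i in
  let D2 := Delta2 n gam Rw c i in
  let D1t := Delta1t n gam Rw c i in
  let D2t := Delta2t n gam Rw c i in
  (is_derive (fun t => hstar n gam Rw (upd c i t) i) (c i) (D1 + D2)
   /\ D1 + D2 < 0
   /\ is_derive (fun t => hstar n gam Rw (upd c j t) i) (c j) D2
   /\ D1 < 0
   /\ (0 < D2 <-> h i / sumR N h < 1 / 2))
  /\
  (is_derive (fun t => hstar n gam Rw (upd c i t) i / Hstar n gam Rw (upd c i t))
      (c i) (D1t + D2t)
   /\ D1t + D2t < 0
   /\ is_derive (fun t => hstar n gam Rw (upd c j t) i / Hstar n gam Rw (upd c j t))
      (c j) D2t
   /\ 0 < D2t
   /\ D1t < 0).
Proof.
  intros _ Hc0 Hmono HRw Hgam HNE Hn Hact Hi Hj Hij; cbv zeta.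
  assert (HH : 0 < sumR N h) by (eapply equilibrium_total_pos; eauto).
  assert (HHs : Hstar n gam Rw c = sumR N h) by (eapply Hstar_equilibrium; eauto).
  assert (Hhi : h i = fcf (c i) gam Rw (sumR N h)) by (eapply equilibrium_hstar; eauto).
  assert (Hmargin : c i * sumR N h < Rw) by (eapply equilibrium_margin; eauto).
  assert (HdG : is_derive (gcf n gam Rw) (sumR n c) (dgcf gam (sumR n c) (sumR N h))).
  { apply is_derive_gcf; auto; [lia|]. eapply equilibrium_cost_sum; eauto. }
  assert (Hcpos := sorted_pos N c Hc0 Hmono).
  assert (Hci : 0 < c i) by (apply Hcpos; lia).
  assert (HciC : c i < sumR n c).
  { assert (0 < c j) by (apply Hcpos; lia).
    assert (c i + c j <= sumR n c) by (apply sumR_ge_two; auto; intros; apply Rlt_le, Hcpos; lia).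
    lra. }
  assert (Hden : Rw + gam * Hstar n gam Rw c ^ 2 <> 0) by (rewrite HHs; nra).
  assert (HH0 : Hstar n gam Rw c <> 0) by (rewrite HHs; lra).
  set (dG := dgcf gam (sumR n c) (sumR N h)) in HdG.
  split; [split; [|split; [|split; [|split]]]|split; [|split; [|split; [|split]]]].
  - now apply is_derive_hstar_own with (dG := dG).
  - rewrite Delta1_eq, (Delta2_eq _ _ _ _ _ HdG), HHs by auto. now apply dfcf_total_neg.
  - now apply is_derive_hstar_cross with (dG := dG).
  - rewrite Delta1_eq, HHs by auto. now apply dfcf_c_neg.
  - rewrite (Delta2_eq _ _ _ _ _ HdG), HHs, Hhi by auto. now apply dfcf_cross_pos_iff.
  - now apply is_derive_share_own with (dG := dG).
  - rewrite Delta1t_eq, (Delta2t_eq _ _ _ _ _ HdG), HHs by auto. now apply dshare_total_neg.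
  - now apply is_derive_share_cross with (dG := dG).
  - rewrite (Delta2t_eq _ _ _ _ _ HdG), HHs by auto. now apply dshare_cross_pos.
  - rewrite Delta1t_eq, HHs by auto. now apply dshare_c_neg.
Qed.
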